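(* Let $G$ be a directed acyclic graph, let $s,t\in V(G)$, and let $k=\operatorname{fes}(G)$. Then the number of distinct directed $s$-$t$ paths in $G$ is at most $2^k$.
   Context: $\operatorname{fes}(G)$ denotes the minimum size of a feedback edge set of the underlying undirected graph of $G$, i.e., the minimum number of edges whose removal makes the underlying undirected graph acyclic (a forest). *)

From mathcomp Require Import all_boot.
Set Implicit Arguments. Unset Strict Implicit. Unset Printing Implicit Defensive.

Definition dag (T : finType) (e : rel T) : Prop :=
  forall x y : T, e x y -> ~~ connect e y x.

Definition edges (T : finType) (e : rel T) : {set T * T} :=
  [set p | e p.1 p.2].

Definition und_minus (T : finType) (e : rel T) (F : {set T * T}) : rel T :=
  fun x y => (e x y && ((x, y) \notin F)) || (e y x && ((y, x) \notin F)).

(* An undirected (simple) graph r is acyclic (a forest): it has no cycle, i.e.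
   no cyclic sequence of >= 3 pairwise distinct vertices with consecutive
   (cyclically) vertices adjacent. *)
Definition und_acyclic (T : finType) (r : rel T) : Prop :=
  forall c : seq T, uniq c -> cycle r c -> size c <= 2.

Definition is_feedback_edge_set (T : finType) (e : rel T) (F : {set T * T}) : Prop :=
  F \subset edges e /\ und_acyclic (und_minus e F).

Definition is_fes (T : finType) (e : rel T) (k : nat) : Prop :=
  (exists F, is_feedback_edge_set e F /\ #|F| = k) /\
  (forall F, is_feedback_edge_set e F -> k <= #|F|).

(* p is (the vertex sequence after s of) a directed s-t path in G. *)
Definition st_path (T : finType) (e : rel T) (s t : T) (p : seq T) : Prop :=
  path e s p /\ last s p = t /\ uniq (s :: p).

From mathcomp Require Import all_boot.
Set Implicit Arguments. Unset Strict Implicit. Unset Printing Implicit Defensive.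

(* Fix a feedback edge set F with |F| = k and send each s-t path to the set of
   edges of F it uses; it suffices to show that this map is injective. Two
   distinct s-t paths with the same F-edges leave the end v of their longest
   common prefix along different edges; let z be the first vertex after v of the
   first path that lies on the second. The two segments from v to z are
   internally disjoint, since a vertex before z on the second path and after z
   on the first would lie on a directed cycle. Neither segment uses an edge of
   F: such an edge would lie on both paths and start at v on each, hence be
   their common first edge. So the two segments form a cycle in G - F, which is
   a forest. *)

Section PathEdges.
Variable T : eqType.

Fixpoint path_edges (x : T) (p : seq T) : seq (T * T) :=
  if p is y :: p' then (x, y) :: path_edges y p' else [::].

Lemma path_edges_cat x p q :
  path_edges x (p ++ q) = path_edges x p ++ path_edges (last x p) q.
Proof. by elim: p x => [|y p IHp] x //=; rewrite IHp. Qed.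

Lemma path_edges_fst x p u : u \in path_edges x p -> u.1 \in belast x p.
Proof.
elim: p x => [|y p IHp] x //=; rewrite !in_cons => /orP[/eqP-> | /IHp->].
  by rewrite eqxx.
by rewrite orbT.
Qed.

Lemma path_edges_from_head x p u :
  uniq (x :: p) -> u \in path_edges x p -> u.1 = x -> u = (x, head x p).
Proof.
case: p => [|y p] //= /andP[xNyp _]; rewrite in_cons => /orP[/eqP-> //|].
by move=> /path_edges_fst /mem_belast u1yp u1x; rewrite -u1x u1yp in xNyp.
Qed.

Lemma uniq_last_head_nil (x : T) p : uniq (x :: p) -> last x p = x -> p = [::].
Proof.
case: p => [|y p] //= /andP[xNyp _] last_x.
by move: (mem_last y p); rewrite last_x (negbTE xNyp).
Qed.

End PathEdges.

Section Forest.
Variables (T : finType) (r : rel T).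
Hypotheses (r_sym : symmetric r) (r_acyclic : und_acyclic r).

Lemma und_acyclic_disjoint_paths s z p q :
  path r s (rcons p z) -> path r s (rcons q z) ->
  uniq (s :: rcons p z) -> uniq (s :: rcons q z) -> ~~ has (mem p) q ->
  p = [::] /\ q = [::].
Proof.
move=> rp rq up uq pNq.
have cycle_pq : cycle r (s :: rcons p z ++ rev q).
  rewrite /= rcons_cat cat_path rp last_rcons /=.
  rewrite -rev_cons -(belast_rcons s q z) -[X in path _ X](last_rcons s q z).
  by rewrite rev_path (eq_path (e' := r)).
have uniq_pq : uniq (s :: rcons p z ++ rev q).
  move: up uq; rewrite -!cats1 /= !mem_cat !in_cons mem_rev !cat_uniq rev_uniq /=.
  rewrite in_nil !orbF !andbT => /and3P[sNpz up zNp] /and3P[sNqz uq zNq].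
  move: sNpz sNqz; rewrite !negb_or => /andP[-> ->] /andP[-> _].
  rewrite up uq zNp has_rev /= andbT.
  apply/hasPn => w wq; rewrite mem_cat inE negb_or.
  apply/andP; split; first by apply: contraNN pNq => wp; apply/hasP; exists w.
  by apply: contraNneq zNq => <-.
move: (r_acyclic uniq_pq cycle_pq); rewrite /= size_cat size_rcons size_rev.
by rewrite addSn !ltnS leqn0 addn_eq0 !size_eq0 => /andP[/eqP-> /eqP->].
Qed.

End Forest.

Lemma path_und_minus (T : finType) (e : rel T) (F : {set T * T}) s p :
  path e s p -> {in path_edges s p, forall u, u \notin F} ->
  path (und_minus e F) s p.
Proof.
elim: p s => [|x p IHp] s //= /andP[esx ep] pF.
apply/andP; split; first by rewrite /und_minus esx pF ?mem_head.
by apply: IHp => // u up; apply: pF; rewrite inE up orbT.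
Qed.

Lemma und_minus_sym (T : finType) (e : rel T) (F : {set T * T}) :
  symmetric (und_minus e F).
Proof. by move=> x y; rewrite /und_minus orbC. Qed.

Section Dag.
Variables (T : finType) (e : rel T).
Hypothesis e_dag : dag e.

Lemma dag_connect_antisym x y : connect e x y -> connect e y x -> x = y.
Proof.
case/connectP=> [[_ -> //|z p] /= /andP[exz pzp] y_last] yx; exfalso.
have zy : connect e z y by apply/connectP; exists p.
by move: (e_dag exz); rewrite (connect_trans zy yx).
Qed.

Lemma dag_path_no_return s q z p : path e s (rcons q z) -> path e z p ->
  z \notin q -> ~~ has (mem q) p.
Proof.
move=> sqz zp zNq; apply/hasP=> -[w wp wq].
have zw : connect e z w by apply: (path_connect zp); rewrite inE wp orbT.
have wz : connect e w z.
  move: sqz; case/splitPr: wq => a b.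
  rewrite rcons_cat rcons_cons cat_path /= => /and3P[_ _ wbz].
  by apply: (path_connect wbz); rewrite inE mem_rcons mem_head orbT.
by move: zNq; rewrite (dag_connect_antisym zw wz) (wq : w \in q).
Qed.

Definition path_edges_in (F : {set T * T}) s p : {set T * T} :=
  [set u in F | u \in path_edges s p].

Lemma first_meeting s P Q :
  path e s P -> path e s Q -> uniq (s :: Q) -> last s P = last s Q ->
  P != [::] -> Q != [::] ->
  exists p1 z p2 q1 q2, [/\ P = rcons p1 z ++ p2, Q = rcons q1 z ++ q2,
    ~~ has (mem Q) p1 & ~~ has (mem P) q1].
Proof.
move=> eP eQ uQ lastPQ nP nQ.
have last_in p : p != [::] -> last s p \in p.
  by case: p => // y p _; rewrite /= mem_last.
have PQ : has (mem Q) P.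
  by apply/hasP; exists (last s P); [|rewrite lastPQ]; apply: last_in.
move: eP lastPQ; case/split_find: PQ nP => z p1 p2 zQ p1NQ _ eP _.
move: eQ uQ p1NQ; case/splitPr: zQ nQ => q1 q2 _ eQ uQ p1NQ.
have zNq1 : z \notin q1.
  by move: uQ; rewrite /= cat_uniq => /and4P[_ _ /hasPn/(_ z (mem_head _ _))].
exists p1, z, p2, q1, q2; split; rewrite ?cat_rcons //.
apply/hasPn => w wq1 /=; rewrite mem_cat inE !negb_or; apply/and3P; split.
- by apply: contra p1NQ => wp1; apply/hasP; exists w => //=; rewrite mem_cat wq1.
- by apply: contraNneq zNq1 => <-.
- move: eQ eP; rewrite -cat_rcons !cat_path !last_rcons.
  move=> /andP[eq1 _] /andP[_ ep2].
  by apply: contra (dag_path_no_return eq1 ep2 zNq1) => wp2; apply/hasP; exists w.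
Qed.

Variable F : {set T * T}.

Lemma meeting_segment_avoids s p1 z p2 Q :
  uniq (s :: rcons p1 z ++ p2) -> uniq (s :: Q) ->
  head s (rcons p1 z ++ p2) != head s Q ->
  path_edges_in F s (rcons p1 z ++ p2) \subset path_edges_in F s Q ->
  ~~ has (mem Q) p1 -> {in path_edges s (rcons p1 z), forall u, u \notin F}.
Proof.
move=> uP uQ headPQ FPQ p1NQ u up; apply/negP => uF.
have uP' : u \in path_edges s (rcons p1 z ++ p2).
  by rewrite path_edges_cat mem_cat up.
have uQ' : u \in path_edges s Q.
  by move/subsetP: FPQ => /(_ u); rewrite !inE uF uP' => /(_ isT).
have u1s : u.1 = s.
  move: (path_edges_fst up); rewrite belast_rcons inE => /orP[/eqP // | u1p1].
  move: (mem_belast (path_edges_fst uQ')); rewrite inE => /orP[/eqP u1s | u1Q].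
    by move: uP; rewrite /= mem_cat mem_rcons inE -u1s u1p1 orbT.
  by move/hasP: p1NQ; case; exists u.1.
move: (path_edges_from_head uP uP' u1s) (path_edges_from_head uQ uQ' u1s).
by move=> -> [headPQ']; rewrite headPQ' eqxx in headPQ.
Qed.

Hypothesis F_acyclic : und_acyclic (und_minus e F).

Lemma path_edges_in_head s P Q :
  path e s P -> path e s Q -> uniq (s :: P) -> uniq (s :: Q) ->
  last s P = last s Q -> P != [::] -> Q != [::] ->
  path_edges_in F s P = path_edges_in F s Q -> head s P = head s Q.
Proof.
move=> eP eQ uP uQ lastPQ nP nQ FPQ; apply/eqP/negPn/negP => headPQ.
have [p1 [z [p2 [q1 [q2 [defP defQ p1NQ q1NP]]]]]] :=
  first_meeting eP eQ uQ lastPQ nP nQ.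
subst P Q.
have prefix_uniq a b : uniq (s :: a ++ b) -> uniq (s :: a).
  by rewrite -cat_cons cat_uniq => /andP[].
have prefix_path a b : path e s (a ++ b) -> path e s a.
  by rewrite cat_path => /andP[].
have p1F : {in path_edges s (rcons p1 z), forall u, u \notin F}.
  by apply: meeting_segment_avoids uP uQ headPQ _ p1NQ; rewrite FPQ.
have q1F : {in path_edges s (rcons q1 z), forall u, u \notin F}.
  by apply: meeting_segment_avoids uQ uP _ _ q1NP; [rewrite eq_sym | rewrite FPQ].
have q1Np1 : ~~ has (mem p1) q1.
  apply: contra q1NP; apply: sub_has => w /=.
  by rewrite mem_cat mem_rcons inE => ->; rewrite orbT.
have [p1_nil q1_nil] :=
  und_acyclic_disjoint_paths (@und_minus_sym _ e F) F_acyclic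
    (path_und_minus (prefix_path _ _ eP) p1F)
    (path_und_minus (prefix_path _ _ eQ) q1F)
    (prefix_uniq _ _ uP) (prefix_uniq _ _ uQ) q1Np1.
by move: headPQ; rewrite p1_nil q1_nil eqxx.
Qed.

Lemma path_edges_in_inj s p q :
  path e s p -> path e s q -> uniq (s :: p) -> uniq (s :: q) ->
  last s p = last s q -> path_edges_in F s p = path_edges_in F s q -> p = q.
Proof.
elim: p s q => [|x p IHp] s [|y q] //.
- by move=> _ _ _ uq /esym/(uniq_last_head_nil uq).
- by move=> _ _ up _ /(uniq_last_head_nil up).
move=> pp pq up uq lastpq Fpq.
have xy : x = y by apply: (path_edges_in_head pp pq up uq lastpq).
subst y; congr (_ :: _).
move: pp pq up uq lastpq => /= /andP[_ pp] /andP[_ pq].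
move=> /andP[sNxp up] /andP[sNxq uq] lastpq.
apply: IHp pp pq up uq lastpq _; apply/setP => u; move/setP: Fpq => /(_ u).
rewrite !inE; have [->|_] //= := eqVneq u (s, x).
have sxN r : s \notin x :: r -> (s, x) \notin path_edges x r.
  by move=> sNxr; apply: contra sNxr => /path_edges_fst/mem_belast.
by rewrite (negbTE (sxN _ sNxp)) (negbTE (sxN _ sNxq)).
Qed.

End Dag.

Theorem lemma3 (T : finType) (e : rel T) (s t : T) (k : nat) :
  dag e -> is_fes e k ->
  forall ps : seq (seq T), uniq ps -> (forall p, p \in ps -> st_path e s t p) ->
  size ps <= 2 ^ k.
Proof.
move=> e_dag [[F [[_ F_acyclic] <-]] _] ps ps_uniq ps_st.
have inj : {in ps &, injective (path_edges_in F s)}.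
  move=> p q /ps_st[pp [lastp up]] /ps_st[pq [lastq uq]].
  by apply: (path_edges_in_inj e_dag F_acyclic pp pq up uq); rewrite lastp lastq.
rewrite -card_powerset -(size_map (path_edges_in F s)) cardE.
apply: uniq_leq_size; first by rewrite map_inj_in_uniq.
move=> A /mapP[p _ ->]; rewrite mem_enum powersetE.
by apply/subsetP => u; rewrite inE => /andP[].
Qed.
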